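(* Let $[\underline R,\overline R]$ be a closed interval of a rich single-crossing domain and $\mu$ a non-trivial continuous probability measure on its Borel $\sigma$-algebra. Let $F^c=(t^c,q^c):[\underline R,\overline R]\to\mathbb{Z}$ be strategy-proof and individually rational with countable, closed range having finitely many limit points, and suppose $E(F)<E(F^c)$ for every strategy-proof, individually rational mechanism $F$ with finite range, where $E(F)=\int t\,d\mu$. Then for every $\epsilon>0$ there is a strategy-proof, individually rational mechanism $F^\epsilon$ with finite range such that $E(F^c)-E(F^\epsilon)\le\epsilon$. Further, if an optimal finite-range mechanism $F^*$ exists (maximizing $E$ among strategy-proof, individually rational mechanisms with finite range), then $E(F^c)\le E(F^* )$.
   Context: $\mathbb{Z}=[0,\infty)\times[0,1]$; $(t',q')<(t'',q'')$ means $t'<t''$, $q'<q''$; $x\le y$ means $x=y$ or $x<y$; $\square(z)=\{x:x\le z\}$. A classical preference is a complete transitive relation $R$ on $\mathbb{Z}$ strictly decreasing in $t$ for fixed $q$, strictly increasing in $q$ for fixed $t$, with closed upper and lower contour sets. Distinct classical preferences satisfy single-crossing if any indifference set of one meets any indifference set of the other in at most one point. A rich single-crossing domain is a set of pairwise single-crossing classical preferences such that for all $x'<x''$ some member is indifferent between them. For distinct members, $R'\prec R''$ means $\square(z)\cap\{x:xR''z\}\subseteq\square(z)\cap\{x:xR'z\}$ for all $z$; $\prec$ is a linear order; $[\underline R,\overline R]$ carries the subspace order topology and Borel $\sigma$-algebra. $\mu$ is non-trivial if every interval with more than one element has positive measure; continuous if for all Borel $A$ with $\mu(A)>0$ and $0<c<\mu(A)$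 there is Borel $B\subseteq A$ with $\mu(B)=c$. A mechanism $F$ is strategy-proof if $F(R')R'F(R'')$ for all $R',R''$, individually rational if $F(R)R(0,0)$ for all $R$. *)

From HB Require Import structures.
From mathcomp Require Import all_boot all_order all_algebra.
From mathcomp Require Import all_classical all_reals all_analysis.
Set Implicit Arguments.
Unset Strict Implicit.
Unset Printing Implicit Defensive.
Import Order.TTheory GRing.Theory Num.Theory.
Import numFieldNormedType.Exports.
Local Open Scope classical_set_scope.
Local Open Scope ring_scope.

Definition Zs {R : realType} : set (R * R) :=
  [set x | 0 <= x.1 /\ 0 <= x.2 <= 1].

Definition ltZ {R : realType} (x y : R * R) : Prop := x.1 < y.1 /\ x.2 < y.2.
Definition leZ {R : realType} (x y : R * R) : Prop := x = y \/ ltZ x y.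
Definition box {R : realType} (z : R * R) : set (R * R) :=
  [set x | Zs x /\ leZ x z].

(* A preference is a binary relation; "x R y" means x is weakly preferred to y.
   Being a relation ON Z is encoded by requiring it to hold only between points of Z. *)
Definition pref (R : realType) := R * R -> R * R -> Prop.


Definition indiff {R : realType} (P : pref R) (x y : R * R) : Prop :=
  P x y /\ P y x.
Definition strict {R : realType} (P : pref R) (x y : R * R) : Prop :=
  P x y /\ ~ P y x.

Definition classical_pref {R : realType} (P : pref R) : Prop :=
     (forall x y, P x y -> Zs x /\ Zs y) /\
      (forall x y, Zs x -> Zs y -> P x y \/ P y x) /\
      (forall x y z, P x y -> P y z -> P x z) /\
      (forall t1 t2 q, Zs (pair t1 q) -> Zs (pair t2 q) -> t1 < t2 ->
         strict P (pair t1 q) (pair t2 q)) /\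
      (forall t q1 q2, Zs (pair t q1) -> Zs (pair t q2) -> q1 < q2 ->
         strict P (pair t q2) (pair t q1)) /\
      (forall z, Zs z -> closed [set x | P x z]) /\
      (forall z, Zs z -> closed [set x | P z x]).

Definition single_crossing {R : realType} (P1 P2 : pref R) : Prop :=
  forall a b x y, Zs a -> Zs b ->
    indiff P1 x a -> indiff P1 y a -> indiff P2 x b -> indiff P2 y b -> x = y.

Definition rich_single_crossing {R : realType} (D : set (pref R)) : Prop :=
  [/\ (forall P, D P -> classical_pref P),
      (forall P1 P2, D P1 -> D P2 -> P1 <> P2 -> single_crossing P1 P2) &
      (forall x y, Zs x -> Zs y -> ltZ x y -> exists2 P, D P & indiff P x y)].

Definition precP {R : realType} (P1 P2 : pref R) : Prop :=
  P1 <> P2 /\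
  forall z, box z `&` [set x | P2 x z] `<=` box z `&` [set x | P1 x z].
Definition preceqP {R : realType} (P1 P2 : pref R) : Prop :=
  P1 = P2 \/ precP P1 P2.

Definition interval {R : realType} (D : set (pref R)) (Rl Rh : pref R) :
  set (pref R) := [set P | D P /\ preceqP Rl P /\ preceqP P Rh].

Definition order_basic {R : realType} (D : set (pref R)) (B : set (pref R)) : Prop :=
  B = D \/
  (exists a, D a /\ B = [set P | D P /\ precP a P]) \/
  (exists b, D b /\ B = [set P | D P /\ precP P b]) \/
  (exists a b, D a /\ D b /\ B = [set P | D P /\ precP a P /\ precP P b]).

Definition order_open {R : realType} (D : set (pref R)) (U : set (pref R)) : Prop :=
  U `<=` D /\
  forall P, U P -> exists B, [/\ order_basic D B, B P & B `<=` U].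

Definition interval_open {R : realType} (D : set (pref R)) (Rl Rh : pref R) :
  set (set (pref R)) :=
  [set U `&` interval D Rl Rh | U in order_open D].

(* The measurable space: sets of preferences with the sigma-algebra generated by the
   open subsets of [Rl, Rh]; its trace on [Rl, Rh] is the Borel sigma-algebra of
   [Rl, Rh]. *)
Definition borelI (R : realType) (D : set (pref R)) (Rl Rh : pref R) :=
  g_sigma_algebraType (interval_open D Rl Rh).

Definition sub_interval {R : realType} (D : set (pref R)) (Rl Rh : pref R)
  (S : set (pref R)) : Prop :=
  exists c d, [/\ interval D Rl Rh c, interval D Rl Rh d &
    (S = [set P | interval D Rl Rh P /\ preceqP c P /\ preceqP P d] \/
     S = [set P | interval D Rl Rh P /\ precP c P /\ precP P d] \/
     S = [set P | interval D Rl Rh P /\ preceqP c P /\ precP P d] \/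
     S = [set P | interval D Rl Rh P /\ precP c P /\ preceqP P d])].

Section Measures.
Context {R : realType} (D : set (pref R)) (Rl Rh : pref R).
Local Notation I := (interval D Rl Rh).

Definition probability_on (mu : {measure set (borelI D Rl Rh) -> \bar R}) : Prop :=
  mu setT = 1%E /\ mu I = 1%E.

Definition nontrivial (mu : {measure set (borelI D Rl Rh) -> \bar R}) : Prop :=
  forall S, sub_interval D Rl Rh S -> (exists x y, [/\ S x, S y & x <> y]) ->
    (0 < mu S)%E.

Definition continuous_measure (mu : {measure set (borelI D Rl Rh) -> \bar R}) : Prop :=
  forall A : set (borelI D Rl Rh), measurable A -> A `<=` I -> (0 < mu A)%E ->
    forall c : R, 0 < c -> (c%:E < mu A)%E ->
      exists B : set (borelI D Rl Rh), [/\ measurable B, B `<=` A & mu B = c%:E].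

Definition mechanism (F : pref R -> R * R) : Prop := forall P, I P -> Zs (F P).

Definition strategy_proof (F : pref R -> R * R) : Prop :=
  forall P1 P2, I P1 -> I P2 -> P1 (F P1) (F P2).

Definition individually_rational (F : pref R -> R * R) : Prop :=
  forall P, I P -> P (F P) (pair 0 0).

Definition mrange (F : pref R -> R * R) : set (R * R) := F @` I.

Definition revenue (mu : {measure set (borelI D Rl Rh) -> \bar R})
  (F : pref R -> R * R) : R :=
  Rintegral mu (I : set (borelI D Rl Rh)) (fun P : borelI D Rl Rh => (F P).1).

Definition admissible_finite (F : pref R -> R * R) : Prop :=
  [/\ mechanism F, strategy_proof F, individually_rational F &
      finite_set (mrange F)].

End Measures.

(* Enumerate the countable range C of F^c as e_0, e_1, ... For a type P the
   value F^c(P) is a P-best point of C, and it is the unique P-best point unless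
   P is indifferent between two comparable points of C; by single crossing such
   a P is the only type with that indifference, so (mu being continuous) these
   ambiguous types form a null set.  Offering the menu {e_0, ..., e_(n-1), (0,0)},
   while keeping F^c(P) whenever it is on the menu, gives a strategy-proof,
   individually rational finite-range mechanism that agrees with F^c on the types
   whose unique best point is among e_0, ..., e_(n-1); these sets exhaust the
   interval up to a null set, so the revenues converge.  E(F^c) > 0 (compare
   with the zero mechanism) guarantees that E(F^c) is a finite integral.

   Measurability of the sets involved rests on the order of the domain: a type
   strictly preferring the lower of two bundles x < y lies below the type
   indifferent between them.  This follows from single crossing by a
   connectedness argument: along a segment of bundles, the relative position of
   two indifference curves through the moving bundle cannot switch. *)

From Pilot Require Import Defs.
From HB Require Import structures.
From mathcomp Require Import all_boot all_order all_algebra.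
From mathcomp Require Import all_classical all_reals all_analysis.
From mathcomp Require Import ring lra.
Import Order.TTheory GRing.Theory Num.Theory.
Import numFieldNormedType.Exports.
Import HBNNSimple.
Local Open Scope classical_set_scope.
Local Open Scope ring_scope.
Set Implicit Arguments.
Unset Strict Implicit.
Unset Printing Implicit Defensive.

Section Segment.
Context {R : realType}.

Definition open_in_segment (a b : R) (A : set R) :=
  forall s, a <= s <= b -> A s ->
    exists2 e : R, 0 < e & forall s', a <= s' <= b -> `|s - s'| < e -> A s'.

Lemma segment_not_split (a b : R) (A B : set R) : a <= b ->
  (forall s, a <= s <= b -> A s \/ B s) ->
  (forall s, a <= s <= b -> A s -> B s -> False) ->
  open_in_segment a b A -> open_in_segment a b B -> A a -> B b -> False.
Proof.
move=> ab cover disj oA oB Aa Bb.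
have segP s : `[a, b]%classic s <-> a <= s <= b by rewrite /= in_itv.
pose balls (X : set R) := \bigcup_(r in [set r | a <= r <= b /\ X r])
  \bigcup_(e in [set e | 0 < e /\ forall s', a <= s' <= b -> `|r - s'| < e -> X s'])
  ball r e.
have balls_open X : open (balls X).
  by apply: bigcup_open => r _; apply: bigcup_open => e _; apply: ball_open.
have balls_seg X : open_in_segment a b X ->
    forall s, a <= s <= b -> balls X s <-> X s.
  move=> oX s abs; split => [[r [_ _] [e [_ He] /= rs]]|Xs]; first exact: He.
  have [e e0 He] := oX s abs Xs.
  by exists s => //; exists e => //; apply: ballxx.
have /seteqP[_ /(_ b)] : `[a, b] `&` A = `[a, b]%classic.
  apply: segment_connected.
  - by exists a; split => //; apply/segP; rewrite lexx ab.
  - exists (balls A) => //; apply/seteqP; split => s [/segP abs Hs];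
      by split; [apply/segP | apply/(balls_seg A oA)].
  - exists (~` balls B); first exact: open_closedC.
    apply/seteqP; split => s [/segP abs Hs]; split; try exact/segP.
      by move/(balls_seg B oB s abs) => Bs; apply: disj Hs Bs.
    by case: (cover s abs) => // /(balls_seg B oB s abs).
have abb : a <= b <= b by rewrite ab lexx.
by case=> [|_ Ab]; [exact/segP | exact: disj abb Ab Bb].
Qed.

End Segment.

Section ConsumptionSpace.
Context {R : realType}.

Lemma ZsE (x : R * R) : Zs x <-> 0 <= x.1 /\ 0 <= x.2 /\ x.2 <= 1.
Proof. by rewrite /Zs /=; split => [[-> /andP[-> ->]]|[-> [-> ->]]]. Qed.

Lemma Zs_pair (t q : R) : 0 <= t -> 0 <= q -> q <= 1 -> Zs (t, q).
Proof. by move=> *; apply/ZsE. Qed.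

Lemma Zs0 : Zs ((0 : R), (0 : R)).
Proof. by apply: Zs_pair; rewrite ?lexx ?ler01. Qed.

Lemma ltZ_neq (x y : R * R) : ltZ x y -> x <> y.
Proof. by move=> [h _] e; move: h; rewrite e ltxx. Qed.

Definition Zopen (A : set (R * R)) := forall u, A u -> exists2 e : R, 0 < e &
  forall w, Zs w -> `|u.1 - w.1| < e -> `|u.2 - w.2| < e -> A w.

Lemma ZopenI A B : Zopen A -> Zopen B -> Zopen (A `&` B).
Proof.
move=> oA oB u [Au Bu]; have [e e0 He] := oA u Au; have [d d0 Hd] := oB u Bu.
exists (Num.min e d) => [|w zw]; first by rewrite lt_min e0 d0.
by rewrite !lt_min => /andP[? ?] /andP[? ?]; split; [apply: He | apply: Hd].
Qed.

Lemma Zopen_local A :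
  (forall u, A u -> exists2 B, Zopen B & B u /\ B `<=` A) -> Zopen A.
Proof.
move=> hA u /hA[B oB [Bu BA]]; have [e e0 He] := oB u Bu.
by exists e => // w zw h1 h2; apply/BA/He.
Qed.

Lemma Zopen_lt1 (T : R) : Zopen [set c | c.1 < T].
Proof.
move=> u /= uT; exists (T - u.1) => [|w _ h _]; first by rewrite subr_gt0.
by move: h; rewrite ltr_norml; lra.
Qed.

Lemma Zopen_lt2 (h : R) : Zopen [set c | c.2 < h].
Proof.
move=> u /= uh; exists (h - u.2) => [|w _ _ d]; first by rewrite subr_gt0.
by move: d; rewrite ltr_norml; lra.
Qed.

Definition path_continuous (f : R -> R * R) := forall s (e : R), 0 < e ->
  exists2 d : R, 0 < d & forall s', `|s - s'| < d ->
    `|(f s).1 - (f s').1| < e /\ `|(f s).2 - (f s').2| < e.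

Lemma open_in_segment_comp A f a b : Zopen A -> path_continuous f ->
  (forall s, a <= s <= b -> Zs (f s)) -> open_in_segment a b (fun s => A (f s)).
Proof.
move=> oA cf zf s _ /oA[e e0 He]; have [d d0 Hd] := cf s e e0.
by exists d => // s' abs' /Hd[h1 h2]; apply: He (zf s' abs') h1 h2.
Qed.

Lemma row_continuous (t : R) : path_continuous (fun q => (t, q)).
Proof. by move=> r e e0; exists e => // r' hr /=; rewrite subrr normr0. Qed.

Lemma column_continuous (q : R) : path_continuous (fun t => (t, q)).
Proof. by move=> r e e0; exists e => // r' hr /=; rewrite subrr normr0. Qed.

Lemma Zopen_row A t q : Zopen A -> A (t, q) -> 0 <= q <= 1 ->
  exists2 e : R, 0 < e & forall t', 0 <= t' -> `|t - t'| < e -> A (t', q).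
Proof.
move=> oA Atq /andP[q0 q1]; have [e e0 He] := oA _ Atq.
by exists e => // t' t0 tt'; apply: He => //=; [apply: Zs_pair | rewrite subrr normr0].
Qed.

Lemma open_in_segment_row A lo hi : Zopen A -> A `<=` Zs -> 0 <= lo -> hi <= 1 ->
  open_in_segment lo hi (fun h => exists t, A (t, h)).
Proof.
move=> oA AZ lo0 hi1 s los [t Ats].
have [t0 _] := (ZsE _).1 (AZ _ Ats).
have row_Zs r : lo <= r <= hi -> Zs (t, r).
  by case/andP => *; apply: Zs_pair => //; lra.
have [e e0 He] := open_in_segment_comp oA (row_continuous t) row_Zs los Ats.
by exists e => // s' los' ss'; exists t; apply: He.
Qed.

Definition seg (x w : R * R) (s : R) : R * R :=
  (x.1 + s * (w.1 - x.1), x.2 + s * (w.2 - x.2)).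

Lemma seg0 x w : seg x w 0 = x.
Proof. by rewrite /seg !mul0r !addr0 -surjective_pairing. Qed.

Lemma seg1 x w : seg x w 1 = w.
Proof. by rewrite /seg !mul1r !(addrC x.1) !(addrC x.2) !subrK -surjective_pairing. Qed.

Lemma seg_Zs x w s : Zs x -> Zs w -> 0 <= s <= 1 -> Zs (seg x w s).
Proof.
move=> /ZsE[a1 [a2 a3]] /ZsE[b1 [b2 b3]] /andP[s0 s1].
by apply/ZsE; rewrite /seg /=; split; [|split]; nra.
Qed.

Lemma seg2_lt1 x w s : x.2 < 1 -> w.2 < 1 -> 0 <= s <= 1 -> (seg x w s).2 < 1.
Proof.
move=> hx hw /andP[s0 s1]; rewrite /seg /=.
have : 0 <= (1 - s) * (1 - x.2) by apply: mulr_ge0; lra.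
have : 0 <= s * (1 - w.2) by apply: mulr_ge0; lra.
case: (ltP s 1) => hs; nra.
Qed.

Lemma seg_continuous x w : path_continuous (seg x w).
Proof.
move=> s e e0.
set K := `|w.1 - x.1| + `|w.2 - x.2| + 1.
have K0 : 0 < K.
  by rewrite /K; have := normr_ge0 (w.1 - x.1); have := normr_ge0 (w.2 - x.2); lra.
exists (e / K) => [|s' hs]; first by rewrite divr_gt0.
have lipschitz (y z : R) : `|z| <= K -> `|y + s * z - (y + s' * z)| < e.
  move=> hz; rewrite opprD addrACA subrr add0r -mulrBl normrM.
  have hK : `|s - s'| * K < e by rewrite -ltr_pdivlMr.
  have := normr_ge0 (s - s'); have := normr_ge0 z; nra.
split; apply: lipschitz; rewrite /K;
  have := normr_ge0 (w.1 - x.1); have := normr_ge0 (w.2 - x.2); lra.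
Qed.

End ConsumptionSpace.

Section ClassicalPreference.
Context {R : realType} (P : pref R).
Hypothesis hP : classical_pref P.

Lemma cp_Zs x y : P x y -> Zs x /\ Zs y.
Proof. by case: hP => H _; apply: H. Qed.

Lemma cp_total x y : Zs x -> Zs y -> P x y \/ P y x.
Proof. by case: hP => _ [H _]; apply: H. Qed.

Lemma cp_trans x y z : P x y -> P y z -> P x z.
Proof. by case: hP => _ [_ [H _]]; apply: H. Qed.

Lemma cp_refl x : Zs x -> P x x.
Proof. by move=> zx; case: (cp_total zx zx). Qed.

Lemma cp_strictN x y : Zs x -> Zs y -> ~ P x y -> strict P y x.
Proof. by move=> zx zy nxy; split => //; case: (cp_total zx zy). Qed.

Lemma strict_cp_trans x y z : strict P x y -> P y z -> strict P x z.
Proof.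
move=> [xy nyx] yz; split; first exact: cp_trans xy yz.
by move=> zx; apply/nyx/(cp_trans yz zx).
Qed.

Lemma cp_strict_trans x y z : P x y -> strict P y z -> strict P x z.
Proof.
move=> xy [yz nzy]; split; first exact: cp_trans xy yz.
by move=> zx; apply/nzy/(cp_trans zx xy).
Qed.

Lemma cp_decr_t t1 t2 q : Zs (t1, q) -> Zs (t2, q) -> t1 < t2 ->
  strict P (t1, q) (t2, q).
Proof. by case: hP => _ [_ [_ [H _]]]; apply: H. Qed.

Lemma cp_incr_q t q1 q2 : Zs (t, q1) -> Zs (t, q2) -> q1 < q2 ->
  strict P (t, q2) (t, q1).
Proof. by case: hP => _ [_ [_ [_ [H _]]]]; apply: H. Qed.

Lemma cp_dominate x y : Zs x -> Zs y -> x.1 <= y.1 -> y.2 <= x.2 -> P x y.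
Proof.
case: x => a b; case: y => c d /= zx zy h1 h2.
have zm : Zs (a, d) by move: zx zy => /ZsE[? _] /ZsE[_ [? ?]]; apply: Zs_pair.
apply: (@cp_trans _ (a, d)).
  move: h2; rewrite le_eqVlt => /orP[/eqP->|lt]; first exact: cp_refl.
  by case: (cp_incr_q zm zx lt).
move: h1; rewrite le_eqVlt => /orP[/eqP->|lt]; first exact: cp_refl.
by case: (cp_decr_t zm zy lt).
Qed.

Lemma cp_strict_dominate x y : Zs x -> Zs y -> x.1 <= y.1 -> y.2 <= x.2 ->
  x <> y -> strict P x y.
Proof.
case: x => a b; case: y => c d /= zx zy h1 h2 nxy.
have zm : Zs (a, d) by move: zx zy => /ZsE[? _] /ZsE[_ [? ?]]; apply: Zs_pair.
move: h2; rewrite le_eqVlt => /orP[/eqP e|lt2].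
  move: h1 zy; rewrite le_eqVlt -e => /orP[/eqP e1 _|lt1 zy]; last exact: cp_decr_t.
  by rewrite e1 e in nxy.
by apply: strict_cp_trans (cp_incr_q zm zx lt2) _; apply: cp_dominate.
Qed.

Lemma Zopen_strict_better c : Zopen [set x | strict P x c].
Proof.
move=> u [uc ncu]; have [zu zc] := cp_Zs uc.
have cl : closed [set x | P c x] by case: hP => _ [_ [_ [_ [_ [_ H]]]]]; apply: H.
have [e e0 He] := (nbhs_ballP _ _).1 (closed_openC cl u ncu).
by exists e => // w zw h1 h2; apply: cp_strictN zc zw (He w _); split.
Qed.

Lemma Zopen_strict_worse c : Zopen [set x | strict P c x].
Proof.
move=> u [cu nuc]; have [zc zu] := cp_Zs cu.
have cl : closed [set x | P x c] by case: hP => _ [_ [_ [_ [_ [H _]]]]]; apply: H.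
have [e e0 He] := (nbhs_ballP _ _).1 (closed_openC cl u nuc).
by exists e => // w zw h1 h2; apply: cp_strictN zw zc (He w _); split.
Qed.

Lemma strict_Zs x y : strict P x y -> Zs x /\ Zs y.
Proof. by case=> /cp_Zs. Qed.

Lemma cp_ivt f c a b : a <= b -> path_continuous f ->
  (forall s, a <= s <= b -> Zs (f s)) -> Zs c ->
  (P (f a) c /\ P c (f b)) \/ (P c (f a) /\ P (f b) c) ->
  exists2 s, a <= s <= b & indiff P (f s) c.
Proof.
move=> ab cf zf zc ends; apply: contrapT => no_indiff.
have nind s : a <= s <= b -> ~ indiff P (f s) c by move=> abs ind; apply: no_indiff; exists s.
have better := open_in_segment_comp (Zopen_strict_better (c:=c)) cf zf.
have worse := open_in_segment_comp (Zopen_strict_worse (c:=c)) cf zf.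
have cover s : a <= s <= b -> strict P (f s) c \/ strict P c (f s).
  move=> abs; case: (cp_total (zf s abs) zc) => H; [left | right];
    by split => // H'; apply: (nind s abs).
have disj s : a <= s <= b -> strict P (f s) c -> strict P c (f s) -> False.
  by move=> _ [_ H] [].
have [aa bb] : a <= a <= b /\ a <= b <= b by rewrite !lexx ab.
case: ends => [[Pa Pb]|[Pa Pb]].
- apply: (segment_not_split ab cover disj better worse).
  + by split => // H; apply: (nind a).
  + by split => // H; apply: (nind b).
- apply: (segment_not_split ab _ _ worse better).
  + by move=> s /cover; rewrite or_comm.
  + by move=> s abs A B; apply: disj abs B A.
  + by split => // H; apply: (nind a).
  + by split => // H; apply: (nind b).
Qed.

End ClassicalPreference.

Section IndifferenceCurves.
Context {R : realType} (P Q : pref R).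
Hypotheses (hP : classical_pref P) (hQ : classical_pref Q).
Variable c : R * R.
Hypothesis zc : Zs c.

(* At height [h], the indifference curve of [P] through [c] lies strictly to the
   left of that of [Q] (resp. strictly to the right). *)
Definition curve_lt (h : R) := exists t, strict P c (t, h) /\ strict Q (t, h) c.
Definition curve_gt (h : R) := exists t, strict P (t, h) c /\ strict Q c (t, h).

Lemma curve_lt_gt_disj h : curve_lt h -> curve_gt h -> False.
Proof.
move=> [t1 [P1 Q1]] [t2 [P2 Q2]].
have sP : strict P (t2, h) (t1, h) := strict_cp_trans hP P2 (proj1 P1).
have sQ : strict Q (t1, h) (t2, h) := strict_cp_trans hQ Q1 (proj1 Q2).
have [z2 z1] := strict_Zs hP sP.
case: (leP t1 t2) => lt; first by case: sP => _; apply; apply: (cp_dominate hP).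
by case: sQ => _; apply; apply: (cp_dominate hQ) => //; apply: ltW.
Qed.

Lemma open_in_segment_curve_lt lo hi : 0 <= lo -> hi <= 1 ->
  open_in_segment lo hi curve_lt.
Proof.
have oA := ZopenI (Zopen_strict_worse hP (c:=c)) (Zopen_strict_better hQ (c:=c)).
by apply: (open_in_segment_row oA) => u [/strict_Zs[]].
Qed.

Lemma open_in_segment_curve_gt lo hi : 0 <= lo -> hi <= 1 ->
  open_in_segment lo hi curve_gt.
Proof.
have oA := ZopenI (Zopen_strict_better hP (c:=c)) (Zopen_strict_worse hQ (c:=c)).
by apply: (open_in_segment_row oA) => u [/strict_Zs[]].
Qed.

Lemma Q_curve_point h T : c.2 < h -> h <= 1 -> c.1 <= T -> Q c (T, h) ->
  exists2 tau, c.1 < tau & indiff Q (tau, h) c.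
Proof.
move=> ch h1 cT QT; have [c1 [c2 _]] := (ZsE c).1 zc.
have zrow s : c.1 <= s <= T -> Zs (s, h) by case/andP => *; apply: Zs_pair; lra.
have Qleft : Q (c.1, h) c.
  by apply: (cp_dominate hQ) => //=; try lra; apply: zrow; rewrite lexx cT.
have [tau /andP[ct tT] iQ] :=
  cp_ivt hQ cT (column_continuous h) zrow zc (or_introl (conj Qleft QT)).
exists tau => //; rewrite lt_neqAle ct andbT; apply/eqP => e.
have neq : (tau, h) <> c by move=> ee; move: ch; rewrite -ee ltxx.
have tc : tau <= c.1 by rewrite e.
have ztau : Zs (tau, h) by apply: zrow; rewrite ct tT.
by have [_] := cp_strict_dominate hQ ztau zc tc (ltW ch) neq; case: iQ.
Qed.

Hypothesis unique_common_indiff :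
  forall v, Zs v -> indiff P v c -> indiff Q v c -> v = c.

Lemma curve_lt_or_gt h T : c.2 < h -> h <= 1 -> c.1 <= T -> Q c (T, h) ->
  curve_lt h \/ curve_gt h.
Proof.
move=> ch h1 cT QT; have [c1 [c2 _]] := (ZsE c).1 zc.
have h01 : 0 <= h <= 1 by apply/andP; split; lra.
have [tau ctau [Qtc Qct]] := Q_curve_point ch h1 cT QT.
have ztau : Zs (tau, h) by apply: Zs_pair; lra.
case: (pselect (P c (tau, h))) => Pct; last first.
  have [e e0 He] :=
    Zopen_row (Zopen_strict_better hP (c:=c)) (cp_strictN hP zc ztau Pct) h01.
  right; exists (tau + e / 2); split.
    by apply: He; [lra | rewrite opprD addrA subrr sub0r normrN ger0_norm; lra].
  have zt : Zs (tau + e / 2, h) by apply: Zs_pair; lra.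
  have lt : tau < tau + e / 2 by lra.
  exact (cp_strict_trans hQ Qct (cp_decr_t hQ ztau zt lt)).
case: (pselect (P (tau, h) c)) => Ptc.
  have /(congr1 snd) /= := unique_common_indiff ztau (conj Ptc Pct) (conj Qtc Qct).
  by move=> ee; move: ch; rewrite -ee ltxx.
have [e e0 He] :=
  Zopen_row (Zopen_strict_worse hP (c:=c)) (cp_strictN hP ztau zc Ptc) h01.
set m := Num.min e (tau - c.1).
have [m_e m_tau] : m <= e /\ m <= tau - c.1 by rewrite !ge_min !lexx orbT.
have m0 : 0 < m by rewrite lt_min e0 subr_gt0.
set d := m / 2.
have [d0 d_e d_tau] : [/\ 0 < d, d < e & d < tau - c.1] by rewrite /d; split; lra.
have zt : Zs (tau - d, h) by apply: Zs_pair; lra.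
left; exists (tau - d); split.
  by apply: He; [lra | rewrite opprB addrC subrK ger0_norm; lra].
have lt : tau - d < tau by lra.
exact (strict_cp_trans hQ (cp_decr_t hQ zt ztau lt) Qtc).
Qed.

Lemma curves_no_switch h1 h2 H T : c.2 < h1 -> h1 <= H -> c.2 < h2 -> h2 <= H ->
  H <= 1 -> c.1 <= T -> Q c (T, H) -> curve_lt h1 -> curve_gt h2 -> False.
Proof.
move=> ch1 h1H ch2 h2H H1 cT QT lt1 gt2.
have [c1 [c2 _]] := (ZsE c).1 zc.
have cover h : c.2 < h -> h <= H -> curve_lt h \/ curve_gt h.
  move=> ch hH; apply: (curve_lt_or_gt (T := T)) => //; first lra.
  apply: (cp_trans hQ) QT _; apply: (cp_dominate hQ) => //=; try lra; apply: Zs_pair; lra.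
have [c0 lo1 lo2 hi1 hi2] : [/\ 0 <= c.2, 0 <= h1, 0 <= h2, h1 <= 1 & h2 <= 1].
  by split; lra.
case: (leP h1 h2) => hh.
  apply: (segment_not_split hh _ _ (open_in_segment_curve_lt lo1 hi2)
    (open_in_segment_curve_gt lo1 hi2) lt1 gt2).
    by move=> s /andP[a b]; apply: cover; lra.
  by move=> s _; apply: curve_lt_gt_disj.
apply: (segment_not_split (ltW hh) _ _ (open_in_segment_curve_gt lo2 hi1)
  (open_in_segment_curve_lt lo2 hi1) gt2 lt1).
  by move=> s /andP[a b]; rewrite or_comm; apply: cover; lra.
by move=> s _ a b; apply: curve_lt_gt_disj b a.
Qed.

End IndifferenceCurves.

Section Orientation.
Context {R : realType} (P Q : pref R).
Hypotheses (hP : classical_pref P) (hQ : classical_pref Q).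

Definition lt_above (c : R * R) := exists h T,
  [/\ c.2 < h, h <= 1, c.1 < T, strict Q c (T, h) & curve_lt P Q c h].
Definition gt_above (c : R * R) := exists h T,
  [/\ c.2 < h, h <= 1, c.1 < T, strict Q c (T, h) & curve_gt P Q c h].

Lemma Zopen_lt_above : Zopen lt_above.
Proof.
apply: Zopen_local => c [h [T [ch h1 cT QT [t [Pt Qt]]]]].
exists ([set c | c.2 < h] `&` [set c | c.1 < T] `&` [set c | strict Q c (T, h)]
  `&` [set c | strict P c (t, h)] `&` [set c | strict Q (t, h) c]).
  exact (ZopenI (ZopenI (ZopenI (ZopenI (Zopen_lt2 (h:=h)) (Zopen_lt1 (T:=T)))
    (Zopen_strict_better hQ (c:=(T, h)))) (Zopen_strict_better hP (c:=(t, h))))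
    (Zopen_strict_worse hQ (c:=(t, h)))).
by split => // c' [[[[c'h c'T] QT'] Pt'] Qt']; exists h, T; split => //; exists t.
Qed.

Lemma Zopen_gt_above : Zopen gt_above.
Proof.
apply: Zopen_local => c [h [T [ch h1 cT QT [t [Pt Qt]]]]].
exists ([set c | c.2 < h] `&` [set c | c.1 < T] `&` [set c | strict Q c (T, h)]
  `&` [set c | strict P (t, h) c] `&` [set c | strict Q c (t, h)]).
  exact (ZopenI (ZopenI (ZopenI (ZopenI (Zopen_lt2 (h:=h)) (Zopen_lt1 (T:=T)))
    (Zopen_strict_better hQ (c:=(T, h)))) (Zopen_strict_worse hP (c:=(t, h))))
    (Zopen_strict_better hQ (c:=(t, h)))).
by split => // c' [[[[c'h c'T] QT'] Pt'] Qt']; exists h, T; split => //; exists t.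
Qed.

Hypothesis unique_common_indiff : forall c v : R * R, Zs c -> Zs v ->
  indiff P v c -> indiff Q v c -> v = c.

Lemma lt_gt_above_disj c : Zs c -> lt_above c -> gt_above c -> False.
Proof.
move=> zc [h1 [T1 [ch1 h11 cT1 QT1 lt1]]] [h2 [T2 [ch2 h21 cT2 QT2 gt2]]].
have uci := unique_common_indiff zc.
case: (leP h1 h2) => hh.
  exact (curves_no_switch hP hQ zc uci ch1 hh ch2 (lexx _) h21 (ltW cT2)
    (proj1 QT2) lt1 gt2).
exact (curves_no_switch hP hQ zc uci ch1 (lexx _) ch2 (ltW hh) h11 (ltW cT1)
  (proj1 QT1) lt1 gt2).
Qed.

Lemma lt_or_gt_above c : Zs c -> c.2 < 1 -> lt_above c \/ gt_above c.
Proof.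
move=> zc c21; have [c1 [c2 _]] := (ZsE c).1 zc.
set T := c.1 + 1.
have zT : Zs (T, c.2) by apply: Zs_pair; rewrite /T; lra.
have zc' : Zs (c.1, c.2) by rewrite -surjective_pairing.
have cT : c.1 < T by rewrite /T; lra.
have QT : strict Q c (T, c.2).
  by have := cp_decr_t hQ zc' zT cT; rewrite -surjective_pairing.
have [e e0 He] := Zopen_strict_worse hQ QT.
set m := Num.min e (1 - c.2).
have [m_e m_1 m0] : [/\ m <= e, m <= 1 - c.2 & 0 < m].
  by rewrite !ge_min !lexx orbT lt_min e0 subr_gt0.
set h := c.2 + m / 2.
have [ch h1] : c.2 < h /\ h <= 1 by rewrite /h; split; lra.
have QTh : strict Q c (T, h).
  apply: He => /=; first by apply: Zs_pair; rewrite /T /h; lra.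
    by rewrite subrr normr0.
  by rewrite /h ler0_norm; lra.
have uci := unique_common_indiff zc.
case: (curve_lt_or_gt hP hQ zc uci ch h1 (ltW cT) (proj1 QTh)).
  by left; exists h, T.
by right; exists h, T.
Qed.

Lemma lt_above_of_indiff_strict x y : Zs x -> Zs y -> ltZ x y ->
  indiff Q x y -> strict P x y -> lt_above x.
Proof.
move=> zx zy [xy1 xy2] [Qxy Qyx] Pxy.
have [x1 _] := (ZsE x).1 zx; have [y1 [y2 y3]] := (ZsE y).1 zy.
have zy' : Zs (y.1, y.2) by rewrite -surjective_pairing.
have [e e0 He] := Zopen_strict_worse hP Pxy.
set m := Num.min e (y.1 - x.1).
have [m_e m_yx m0] : [/\ m <= e, m <= y.1 - x.1 & 0 < m].
  by rewrite !ge_min !lexx orbT lt_min e0 subr_gt0.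
set t := y.1 - m / 2.
have zt : Zs (t, y.2) by apply: Zs_pair; rewrite /t; lra.
have zT : Zs (y.1 + 1, y.2) by apply: Zs_pair; lra.
exists y.2, (y.1 + 1); split => //; first lra.
  apply: (cp_strict_trans hQ Qxy).
  by have := cp_decr_t hQ zy' zT (ltac:(lra)); rewrite -surjective_pairing.
exists t; split.
  by apply: He => //=; [rewrite /t ger0_norm; lra | rewrite subrr normr0].
have ty : t < y.1 by rewrite /t; lra.
apply: (strict_cp_trans hQ) Qyx.
by have := cp_decr_t hQ zt zy' ty; rewrite -surjective_pairing.
Qed.

Lemma gt_above_of_pref_strict w z : Zs w -> Zs z -> ltZ w z ->
  Q w z -> strict P z w -> gt_above w.
Proof.
move=> zw zz [wz1 wz2] Qwz Pzw.
have [z1 [z2 z3]] := (ZsE z).1 zz.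
have zz' : Zs (z.1, z.2) by rewrite -surjective_pairing.
have [e e0 He] := Zopen_strict_better hP Pzw.
set t := z.1 + e / 2.
have zt : Zs (t, z.2) by apply: Zs_pair; rewrite /t; lra.
have zT : Zs (z.1 + 1, z.2) by apply: Zs_pair; lra.
exists z.2, (z.1 + 1); split => //; first lra.
  apply: (cp_strict_trans hQ Qwz).
  by have := cp_decr_t hQ zz' zT (ltac:(lra)); rewrite -surjective_pairing.
exists t; split.
  by apply: He => //=; [rewrite /t ler0_norm; lra | rewrite subrr normr0].
have zt' : z.1 < t by rewrite /t; lra.
apply: (cp_strict_trans hQ Qwz).
by have := cp_decr_t hQ zz' zt zt'; rewrite -surjective_pairing.
Qed.

(* Moving along the segment from [x] to [w], [lt_above] would have to turn into
   [gt_above]; both are relatively open and they are disjoint. *)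
Lemma no_reversal x y w z : Zs x -> Zs y -> Zs w -> Zs z ->
  ltZ x y -> indiff Q x y -> strict P x y ->
  ltZ w z -> Q w z -> strict P z w -> False.
Proof.
move=> zx zy zw zz xy iQ Pxy wz Qwz Pzw.
have zseg s : 0 <= s <= 1 -> Zs (seg x w s) by apply: seg_Zs.
have [x2 w2] : x.2 < 1 /\ w.2 < 1.
  by case: xy wz => _ ? [_ ?]; have [_ [_ ?]] := (ZsE y).1 zy;
    have [_ [_ ?]] := (ZsE z).1 zz; split; lra.
have olt := open_in_segment_comp Zopen_lt_above (seg_continuous x w) zseg.
have ogt := open_in_segment_comp Zopen_gt_above (seg_continuous x w) zseg.
apply: (segment_not_split ler01 _ _ olt ogt).
- by move=> s s01; apply: lt_or_gt_above (zseg s s01) (seg2_lt1 x2 w2 s01).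
- by move=> s s01; apply: lt_gt_above_disj (zseg s s01).
- by rewrite seg0; apply: lt_above_of_indiff_strict zx zy xy iQ Pxy.
- by rewrite seg1; apply: gt_above_of_pref_strict zw zz wz Qwz Pzw.
Qed.

End Orientation.

Section PreferenceOrder.
Context {R : realType}.
Implicit Types (P Q : pref R) (x y : R * R).

Lemma single_crossing_indiff P Q : classical_pref P -> classical_pref Q ->
  single_crossing P Q ->
  forall c v, Zs c -> Zs v -> indiff P v c -> indiff Q v c -> v = c.
Proof.
move=> hP hQ sc c v zc zv iP iQ.
by apply: (sc c c v c zc zc) => //; split; apply: cp_refl.
Qed.

Lemma prefer_lower_precP P Q x y : classical_pref P -> classical_pref Q ->
  (P <> Q -> single_crossing P Q) -> Zs x -> Zs y -> ltZ x y ->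
  indiff Q x y -> strict P x y -> precP P Q.
Proof.
move=> hP hQ sc zx zy xy iQ sP.
have nPQ : P <> Q by move=> e; case: sP => _; rewrite e; case: iQ.
split => // z w [[zw lw] Qwz]; split; first by split.
case: lw => [->|lt]; first by apply: (cp_refl hP); have [] := cp_Zs hQ Qwz.
apply: contrapT => nP; have [_ zz] := cp_Zs hQ Qwz.
have uci := single_crossing_indiff hP hQ (sc nPQ).
exact: (no_reversal hP hQ uci zx zy zw zz xy iQ sP lt Qwz (cp_strictN hP zw zz nP)).
Qed.

(* A type preferring the upper bundle is indifferent between [y] and a point
   [u] vertically above [x]; now it is [Q] that strictly prefers the lower one. *)
Lemma prefer_upper_precP P Q x y : classical_pref P -> classical_pref Q ->
  (Q <> P -> single_crossing Q P) -> Zs x -> Zs y -> ltZ x y ->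
  indiff Q x y -> strict P y x -> precP Q P.
Proof.
move=> hP hQ sc zx zy [xy1 xy2] iQ sP.
have [x1 [x2 x3]] := (ZsE x).1 zx; have [y1 [y2 y3]] := (ZsE y).1 zy.
have zcol q : x.2 <= q <= y.2 -> Zs (x.1, q) by case/andP => *; apply: Zs_pair; lra.
have zx' : Zs (x.1, x.2) by rewrite -surjective_pairing.
have zy' : Zs (y.1, y.2) by rewrite -surjective_pairing.
have Pbot : P y (x.1, x.2) by rewrite -surjective_pairing; case: sP.
have sPtop : strict P (x.1, y.2) y.
  have zxy : Zs (x.1, y.2) by apply: zcol; apply/andP; split; lra.
  by have := cp_decr_t hP zxy zy' xy1; rewrite -surjective_pairing.
have [q /andP[q1 q2] iP] := cp_ivt hP (ltW xy2) (row_continuous x.1) zcol zy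
  (or_intror (conj Pbot (proj1 sPtop))).
have qx : x.2 < q.
  rewrite lt_neqAle q1 andbT; apply/eqP => e; move: iP; rewrite -e.
  by rewrite -surjective_pairing => -[H _]; case: sP => _ /(_ H).
have qy : q < y.2.
  rewrite lt_neqAle q2 andbT; apply/eqP => e; move: iP; rewrite e.
  by move=> [_ H]; case: sPtop => _ /(_ H).
have zu := zcol q (ltac:(apply/andP; split; lra)).
have sQ : strict Q (x.1, q) y.
  apply: (strict_cp_trans hQ) (proj1 iQ).
  by have := cp_incr_q hQ zx' zu qx; rewrite -surjective_pairing.
by apply: (prefer_lower_precP hQ hP sc zu zy) => //; split.
Qed.

Variable D : set (pref R).
Hypothesis hD : rich_single_crossing D.

Lemma rsc_classical P : D P -> classical_pref P.
Proof. by case: hD => H _ _; apply: H. Qed.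

Lemma rsc_single_crossing P Q : D P -> D Q -> P <> Q -> single_crossing P Q.
Proof. by case: hD => _ H _; apply: H. Qed.

Lemma rsc_rich x y : Zs x -> Zs y -> ltZ x y -> exists2 P, D P & indiff P x y.
Proof. by case: hD => _ _ H; apply: H. Qed.

Lemma rsc_indiff_unique a P x y : D a -> D P -> Zs x -> Zs y -> ltZ x y ->
  indiff a x y -> indiff P x y -> P = a.
Proof.
move=> Da DP zx zy xy ia iP; apply: contrapT => nPa.
apply: (ltZ_neq xy); apply: esym.
exact (single_crossing_indiff (rsc_classical DP) (rsc_classical Da)
  (rsc_single_crossing DP Da nPa) zx zy (conj iP.2 iP.1) (conj ia.2 ia.1)).
Qed.

Lemma strict_lower_precP a P x y : D a -> D P -> Zs x -> Zs y -> ltZ x y ->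
  indiff a x y -> strict P x y <-> precP P a.
Proof.
move=> Da DP zx zy xy ia; have ha := rsc_classical Da; have hP := rsc_classical DP.
split => [|[nPa inc]]; first exact: prefer_lower_precP hP ha (rsc_single_crossing DP Da) zx zy xy ia.
have Pxy : P x y by have [] := inc y x (conj (conj zx (or_intror xy)) ia.1).
by split => // Pyx; apply/nPa/(rsc_indiff_unique Da DP zx zy xy ia).
Qed.

Lemma strict_upper_precP a P x y : D a -> D P -> Zs x -> Zs y -> ltZ x y ->
  indiff a x y -> strict P y x <-> precP a P.
Proof.
move=> Da DP zx zy xy ia; have ha := rsc_classical Da; have hP := rsc_classical DP.
split => [|[naP inc]]; first exact: prefer_upper_precP hP ha (rsc_single_crossing Da DP) zx zy xy ia.
have niP : ~ indiff P x y.
  by move=> iP; apply/naP/esym/(rsc_indiff_unique Da DP zx zy xy ia).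
case: (pselect (P y x)) => Pyx; first by split => // Pxy; apply: niP.
(* otherwise [P] strictly prefers [x], hence also a point left of [y] that [a]
   ranks above [x], contradicting [a ≺ P] *)
have [x1 [x2 x3]] := (ZsE x).1 zx; have [y1 [y2 y3]] := (ZsE y).1 zy.
case: xy => xy1 xy2.
have [e e0 He] := Zopen_strict_worse hP (cp_strictN hP zy zx Pyx).
set m := Num.min e (y.1 - x.1).
have [m_e m_yx m0] : [/\ m <= e, m <= y.1 - x.1 & 0 < m].
  by rewrite !ge_min !lexx orbT lt_min e0 subr_gt0.
set t := y.1 - m / 2.
have zt : Zs (t, y.2) by apply: Zs_pair; rewrite /t; lra.
have zy' : Zs (y.1, y.2) by rewrite -surjective_pairing.
have Pxt : P x (t, y.2).
  by apply: (proj1 (He (t, y.2) zt _ _)) => /=; [rewrite /t ger0_norm; lra | rewrite subrr normr0].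
have ty : t < y.1 by rewrite /t; lra.
have sat : strict a (t, y.2) x.
  apply: (strict_cp_trans ha) (proj2 ia).
  by have := cp_decr_t ha zt zy' ty; rewrite -surjective_pairing.
have lt : ltZ x (t, y.2) by split => /=; rewrite /t; lra.
have [_ /=] := inc (t, y.2) x (conj (conj zx (or_intror lt)) Pxt).
by case: sat.
Qed.

Lemma precP_trichotomy a P x y : D a -> D P -> Zs x -> Zs y -> ltZ x y ->
  indiff a x y -> P = a \/ precP P a \/ precP a P.
Proof.
move=> Da DP zx zy xy ia; have hP := rsc_classical DP.
case: (pselect (P x y)) => Pxy; last first.
  by right; right; apply/(strict_upper_precP Da DP zx zy xy ia); apply: cp_strictN.
case: (pselect (P y x)) => Pyx; first by left; exact (rsc_indiff_unique Da DP zx zy xy ia (conj Pxy Pyx)).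
by right; left; apply/(strict_lower_precP Da DP zx zy xy ia).
Qed.

End PreferenceOrder.

Lemma not_ltZ_dominate {R : realType} (x y : R * R) : ~ ltZ x y -> ~ ltZ y x ->
  (x.1 <= y.1 /\ y.2 <= x.2) \/ (y.1 <= x.1 /\ x.2 <= y.2).
Proof.
rewrite /ltZ => nxy nyx.
case: (leP x.1 y.1) => h1; last first.
  right; split; first exact: ltW.
  by rewrite leNgt; apply/negP => h2; apply: nyx.
case: (leP y.2 x.2) => h2; first by left.
right; split; last exact: ltW.
by rewrite leNgt; apply/negP => h3; apply: nxy.
Qed.

Section BorelSets.
Context {R : realType} (D : set (pref R)) (Rl Rh : pref R).
Hypothesis hD : rich_single_crossing D.
Local Notation I := (Defs.interval D Rl Rh).
Local Notation T := (borelI D Rl Rh).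

Lemma interval_D P : I P -> D P. Proof. by case. Qed.

Lemma measurable_order_open (U : set (pref R)) : order_open D U ->
  measurable (U `&` I : set T).
Proof. by move=> oU; apply: sub_sigma_algebra; exists U. Qed.

Lemma measurable_order_basic (B : set (pref R)) : order_basic D B -> B `<=` D ->
  measurable (B `&` I : set T).
Proof. by move=> bB BD; apply: measurable_order_open; split => // P BP; exists B; split. Qed.

Lemma measurable_interval : measurable (I : set T).
Proof.
rewrite -(setIidr (@interval_D)).
by apply: measurable_order_basic => //; left.
Qed.

Lemma measurable_below a : D a -> measurable ([set P | I P /\ precP P a] : set T).
Proof.
move=> Da; have -> : [set P | I P /\ precP P a] = [set P | D P /\ precP P a] `&` I.
  by apply/seteqP; split => [P [IP pa]|P [[_ pa] IP]]; do 2?split => //; case: IP.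
by apply: measurable_order_basic => [|P []//]; right; right; left; exists a.
Qed.

Lemma measurable_above a : D a -> measurable ([set P | I P /\ precP a P] : set T).
Proof.
move=> Da; have -> : [set P | I P /\ precP a P] = [set P | D P /\ precP a P] `&` I.
  by apply/seteqP; split => [P [IP pa]|P [[_ pa] IP]]; do 2?split => //; case: IP.
by apply: measurable_order_basic => [|P []//]; right; left; exists a.
Qed.

(* The member of [D] indifferent between [x] and [y], for [ltZ x y] (unique by
   single crossing). *)
Definition indiff_pref (x y : R * R) : pref R := [get a | D a /\ indiff a x y].

Lemma indiff_prefP x y : Zs x -> Zs y -> ltZ x y ->
  D (indiff_pref x y) /\ indiff (indiff_pref x y) x y.
Proof.
move=> zx zy xy; apply: (@getPex _ [set a | D a /\ indiff a x y]).
by have [a Da ia] := rsc_rich hD zx zy xy; exists a.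
Qed.

Definition prefers (x y : R * R) : set T := [set P | I P /\ strict P x y].

Lemma measurable_prefers x y : Zs x -> Zs y -> measurable (prefers x y).
Proof.
move=> zx zy.
case: (pselect (ltZ x y)) => xy.
  have [Da ia] := indiff_prefP zx zy xy.
  have -> : prefers x y = [set P | I P /\ precP P (indiff_pref x y)].
    by apply/seteqP; split => P [IP H]; split => //;
      apply/(strict_lower_precP hD Da (interval_D IP) zx zy xy ia).
  exact: measurable_below.
case: (pselect (ltZ y x)) => yx.
  have [Da ia] := indiff_prefP zy zx yx.
  have -> : prefers x y = [set P | I P /\ precP (indiff_pref y x) P].
    by apply/seteqP; split => P [IP H]; split => //;
      apply/(strict_upper_precP hD Da (interval_D IP) zy zx yx ia).
  exact: measurable_above.
case: (pselect (x = y)) => [<-|nxy].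
  by rewrite (_ : prefers x x = set0) //; apply/seteqP; split => P // [_ []].
have clP P : I P -> classical_pref P by move/interval_D/(rsc_classical hD).
case: (not_ltZ_dominate xy yx) => [[h1 h2]|[h1 h2]].
  rewrite (_ : prefers x y = I); first exact: measurable_interval.
  apply/seteqP; split => [P []//|P IP]; split => //.
  exact (cp_strict_dominate (clP P IP) zx zy h1 h2 nxy).
rewrite (_ : prefers x y = set0) //; apply/seteqP; split => P // [IP [_]]; apply.
exact (cp_dominate (clP P IP) zy zx h1 h2).
Qed.

Lemma measurable_indiff_pref x y : Zs x -> Zs y -> ltZ x y ->
  measurable ([set P | I P /\ P = indiff_pref x y] : set T).
Proof.
move=> zx zy xy; have [Da ia] := indiff_prefP zx zy xy.
rewrite (_ : [set P | _] = I `\` (prefers x y `|` prefers y x)).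
  by apply: measurableD; [exact: measurable_interval | apply: measurableU; apply: measurable_prefers].
apply/seteqP; split => P.
  move=> [IP eP]; subst P; split => // -[[_ [_ h]]|[_ [_ h]]]; apply: h; case: ia => //.
move=> [IP nW]; split => //.
case: (precP_trichotomy hD Da (interval_D IP) zx zy xy ia) => [//|[h|h]]; exfalso; apply: nW.
  by left; split => //; apply/(strict_lower_precP hD Da (interval_D IP) zx zy xy ia).
by right; split => //; apply/(strict_upper_precP hD Da (interval_D IP) zx zy xy ia).
Qed.

End BorelSets.

Lemma mem_le_sum_norm {R : realDomainType} (s : seq R) z :
  z \in s -> z <= \sum_(w <- s) `|w|.
Proof.
elim: s => [//|w s IH]; rewrite inE big_cons => /orP[/eqP ->|hs].
  by apply: le_trans (ler_norm _) _; rewrite lerDl sumr_ge0.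
by apply: le_trans (IH hs) _; rewrite lerDr.
Qed.

Section IntegralApproximation.
Context d (T : measurableType d) (R : realType) (mu : {measure set T -> \bar R}).

(* No measurability is needed: a nonnegative integral is a supremum over the
   simple functions below the integrand. *)
Lemma ge0_le_integral_sup (A : set T) (f g : T -> \bar R) :
  (forall x, A x -> 0 <= f x)%E -> (forall x, A x -> f x <= g x)%E ->
  (\int[mu]_(x in A) f x <= \int[mu]_(x in A) g x)%E.
Proof.
move=> f0 fg.
have g0 x : A x -> (0 <= g x)%E by move=> Ax; apply: le_trans (f0 x Ax) (fg x Ax).
rewrite (ge0_integralE _ f0) (ge0_integralE _ g0).
apply: ereal_sup_le => _ [h hf <-]; exists h => // x.
apply: le_trans (hf x) _; rewrite /patch; case: ifP => // /[!inE] Ax.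
exact: fg.
Qed.

Lemma nnsfun_bounded (h : {nnsfun T >-> R}) :
  exists2 B : R, 0 <= B & forall x, h x <= B.
Proof.
have [X hX] := (finite_fsetP (T := R)).1 (fimfunP h).
exists (\sum_(w <- finmap.enum_fset X) `|w|).
  by apply: sumr_ge0 => i _; apply: normr_ge0.
by move=> x; apply: mem_le_sum_norm; have /[!hX] := imageT h x.
Qed.

Lemma integral_nnsfun_le_restrict (I K : set T) (h : {nnsfun T >-> R}) (B : R) :
  measurable I -> measurable K -> K `<=` I -> (forall x, h x <= B) ->
  (\int[mu]_(x in I) (h x)%:E <=
    \int[mu]_(x in K) (h x)%:E + B%:E * mu (I `\` K))%E.
Proof.
move=> mI mK KI hB.
have mIK : measurable (I `\` K) by exact: measurableD.
rewrite -{1}(setDUK KI) ge0_integral_setU //; first last.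
- by apply/disj_setPS => x [? []].
- by move=> x _; rewrite lee_fin.
- by apply/measurable_realfun.measurable_EFinP; apply: measurable_funP.
apply: leeD2l; rewrite -integral_cst //.
apply: ge0_le_integral => //; first by move=> x _; rewrite lee_fin.
- by apply/measurable_realfun.measurable_EFinP; apply: measurable_funP.
- by move=> x _; rewrite lee_fin.
Qed.

Lemma ge0_integral_approx (I : set T) (f : T -> R) (eps : R) :
  measurable I -> (forall x, I x -> 0 <= f x) ->
  (\int[mu]_(x in I) (f x)%:E < +oo)%E -> 0 < eps ->
  exists2 delta : R, 0 < delta & forall (K : set T) (g : T -> R),
    measurable K -> K `<=` I -> (mu (I `\` K) < delta%:E)%E ->
    (forall x, I x -> 0 <= g x) -> (forall x, K x -> f x <= g x) ->
    (\int[mu]_(x in I) (f x)%:E <= \int[mu]_(x in I) (g x)%:E + eps%:E)%E.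
Proof.
move=> mI f0 fi e0.
have f0E x : I x -> (0 <= (f x)%:E)%E by move=> /f0; rewrite lee_fin.
set V := (\int[mu]_(x in I) (f x)%:E)%E.
have Vr : V = (fine V)%:E by rewrite fineK // ge0_fin_numE // integral_ge0.
have : ((fine V - eps / 2)%:E < V)%E by rewrite {2}Vr lte_fin; lra.
rewrite {2}/V (ge0_integralE _ f0E) => /ereal_sup_gt [_ [h hf <-]] hV.
have h_out x : ~ I x -> h x = 0.
  move=> nIx; have := hf x; rewrite /patch; case: ifP => [/[!inE]//|_].
  by rewrite lee_fin => hx; apply/eqP; rewrite eq_le hx /=; apply: fun_ge0.
have hI : sintegral mu h = (\int[mu]_(x in I) (h x)%:E)%E.
  rewrite integral_nnsfun //; congr sintegral; apply/funext => x.
  by rewrite /patch; case: ifP => // /negbT; rewrite notin_setE => /h_out ->.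
have [B B0 hB] := nnsfun_bounded h.
set delta := eps / (2 * (B + 1)).
have BB1 : 0 < 2 * (B + 1) by lra.
have delta0 : 0 < delta by rewrite divr_gt0.
have Bdelta : B * delta <= eps / 2.
  have : delta * (2 * (B + 1)) = eps by rewrite /delta mulfVK // gt_eqF.
  nra.
exists delta => // K g mK KI Kd g0 fg.
have hK : (\int[mu]_(x in K) (h x)%:E <= \int[mu]_(x in I) (g x)%:E)%E.
  have -> : K = I `&` K by apply/esym/setIidr.
  rewrite integral_mkcondr; apply: ge0_le_integral_sup.
    by move=> x _; rewrite /patch; case: ifP; rewrite lee_fin.
  move=> x Ix; rewrite /patch; case: ifP => [/[!inE] Kx|_]; last by rewrite lee_fin g0.
  apply: le_trans (hf x) _; rewrite /patch mem_set // lee_fin; exact: fg.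
have rest : (B%:E * mu (I `\` K) <= (eps / 2)%:E)%E.
  apply: le_trans (_ : B%:E * delta%:E <= _)%E; last by rewrite -EFinM lee_fin.
  by apply: lee_wpmul2l; rewrite ?lee_fin // ltW.
rewrite Vr; apply: le_trans (_ : (sintegral mu h + (eps / 2)%:E)%E <= _)%E.
  by apply: ltW; rewrite -lteBlDr // -EFinB.
have -> : eps%:E = ((eps / 2)%:E + (eps / 2)%:E)%E by rewrite -EFinD; congr EFin; lra.
rewrite hI addeA; apply: leeD2r; apply: le_trans (integral_nnsfun_le_restrict mI mK KI hB) _.
exact: leeD.
Qed.

End IntegralApproximation.

Section ContinuousMeasure.
Context {R : realType} (D : set (pref R)) (Rl Rh : pref R).
Variable mu : {measure set (borelI D Rl Rh) -> \bar R}.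
Hypotheses (hmu : probability_on mu) (mcont : continuous_measure mu).
Local Notation I := (Defs.interval D Rl Rh).

Lemma continuous_measure_subsingleton (A : set (borelI D Rl Rh)) :
  measurable A -> A `<=` I -> (forall P Q, A P -> A Q -> P = Q) -> mu A = 0%E.
Proof.
move=> mA AI A1; apply/eqP; rewrite eq_le measure_ge0 andbT leNgt; apply/negP => Apos.
have Afin : mu A \is a fin_num.
  rewrite ge0_fin_numE // (le_lt_trans _ (ltry 1)) //; case: hmu => _ <-.
  by apply: le_measure => //; rewrite inE //; apply: measurable_interval.
have m0 : 0 < fine (mu A) by rewrite -lte_fin fineK.
have c0 : 0 < fine (mu A) / 2 by exact: divr_gt0.
have cA : ((fine (mu A) / 2)%:E < mu A)%E by rewrite -{2}(fineK Afin) lte_fin; lra.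
have [B [mB BA muB]] := mcont mA AI Apos c0 cA.
have [Q BQ] : B !=set0.
  apply/set0P/eqP => B0; move: muB; rewrite B0 measure0 => /esym/eqP.
  by rewrite eqe gt_eqF.
have BeA : B = A by apply/seteqP; split => // P AP; rewrite (A1 P Q AP (BA Q BQ)).
by move: muB; rewrite BeA -{1}(fineK Afin) => /eqP; rewrite eqe => /eqP; lra.
Qed.

End ContinuousMeasure.

Section FiniteMenu.
Context {R : realType} (P : pref R).
Hypothesis hP : classical_pref P.

Fixpoint menu_choice (s : seq (R * R)) : R * R :=
  if s is x :: s' then
    if `[< P x (menu_choice s') >] then x else menu_choice s'
  else (0, 0).

Lemma menu_choice_mem s : menu_choice s \in (0, 0) :: s.
Proof.
elim: s => [|x s IH] /=; first by rewrite mem_seq1.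
case: asboolP => _; first by rewrite !inE eqxx orbT.
by move: IH; rewrite !inE => /orP[->|->]; rewrite ?orbT.
Qed.

Lemma menu_choice_best s : (forall z, z \in s -> Zs z) ->
  forall z, z \in (0, 0) :: s -> P (menu_choice s) z.
Proof.
elim: s => [|x s IH] zs z /=.
  by rewrite mem_seq1 => /eqP ->; apply: (cp_refl hP Zs0).
have zs' : forall z, z \in s -> Zs z by move=> w ws; apply: zs; rewrite inE ws orbT.
have zx : Zs x by apply: zs; rewrite inE eqxx.
have zb : Zs (menu_choice s).
  by move: (menu_choice_mem s); rewrite inE => /orP[/eqP ->|/zs' //]; exact: Zs0.
have IH0 : P (menu_choice s) (0, 0) by apply: IH; rewrite // inE eqxx.
rewrite !inE => /orP[/eqP ->|/orP[/eqP ->|hz]]; case: asboolP => Pxb //=.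
- exact (cp_trans hP Pxb IH0).
- exact (cp_refl hP zx).
- by case: (cp_total hP zx zb).
- by apply: (cp_trans hP Pxb); apply: IH; rewrite // inE hz orbT.
- by apply: IH; rewrite // inE hz orbT.
Qed.

End FiniteMenu.

Section CountableRange.
Context {R : realType} (D : set (pref R)) (Rl Rh : pref R).
Variable mu : {measure set (borelI D Rl Rh) -> \bar R}.
Variable Fc : pref R -> R * R.
Hypotheses (hD : rich_single_crossing D) (hmu : probability_on mu).
Hypothesis mcont : continuous_measure mu.
Hypotheses (mech : mechanism D Rl Rh Fc) (sp : strategy_proof D Rl Rh Fc).
Hypothesis ir : individually_rational D Rl Rh Fc.
Local Notation I := (Defs.interval D Rl Rh).
Local Notation T := (borelI D Rl Rh).
Local Notation C := (mrange D Rl Rh Fc).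

Variable e : nat -> R * R.
Hypothesis e_range : forall k, C (e k) \/ e k = (0, 0).
Hypothesis e_onto : forall x, C x -> exists k, e k = x.

Lemma range_Zs x : C x -> Zs x.
Proof. by move=> [P IP <-]; apply: mech. Qed.

Lemma e_Zs k : Zs (e k).
Proof. by case: (e_range k) => [/range_Zs //|->]; exact: Zs0. Qed.

Lemma interval_classical P : I P -> classical_pref P.
Proof. by move/interval_D/(rsc_classical hD). Qed.

Lemma Fc_best P x : I P -> C x -> P (Fc P) x.
Proof. by move=> IP [P' IP' <-]; apply: sp. Qed.

Lemma Fc_best_e P k : I P -> P (Fc P) (e k).
Proof. by move=> IP; case: (e_range k) => [/(Fc_best IP)|->] //; exact: ir. Qed.

Definition unique_best (x : R * R) : set T :=
  [set P | I P /\ C x /\ (forall y, C y -> y <> x -> strict P x y)].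

Lemma measurable_unique_best x : measurable (unique_best x).
Proof.
case: (pselect (C x)) => Cx; last first.
  by rewrite (_ : unique_best x = set0) //; apply/seteqP; split => P // [_ []].
pose V k : set T := if `[< C (e k) /\ e k <> x >] then prefers x (e k) :> set T
  else setT.
rewrite (_ : unique_best x = I `&` \bigcap_k V k).
  apply: measurableI; first exact: measurable_interval.
  apply: bigcapT_measurable => k; rewrite /V.
  by case: asboolP => [[Ce _]|_] //; apply: (measurable_prefers hD); apply: range_Zs.
apply/seteqP; split => P.
  move=> [IP [_ H]]; split => // k _; rewrite /V.
  by case: asboolP => [[Ce ne]|//]; split => //; apply: H.
move=> [IP HV]; split => //; split => // y Cy nyx.
have [k ek] := e_onto Cy; have := HV k Logic.I; rewrite /V.
by case: asboolP => [_|[]]; rewrite ek // => -[].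
Qed.

Lemma unique_best_Fc x P : unique_best x P -> Fc P = x.
Proof.
move=> [IP [Cx H]]; apply: contrapT => ne.
by case: (H _ (ex_intro2 _ _ P IP erefl) ne) => _; apply; apply: Fc_best.
Qed.

Lemma not_unique_best_indiff P : I P -> ~ (\bigcup_k unique_best (e k)) P ->
  exists j k, ltZ (e j) (e k) /\ P = indiff_pref D (e j) (e k).
Proof.
move=> IP nT; have hP := interval_classical IP; have DP := interval_D IP.
have CF : C (Fc P) by exists P.
have [j ej] := e_onto CF.
have [y [Cy [nyx ns]]] : exists y, C y /\ y <> Fc P /\ ~ strict P (Fc P) y.
  apply: contrapT => H; apply: nT; exists j => //; rewrite ej; split => //; split => //.
  by move=> y Cy nyx; apply: contrapT => ns; apply: H; exists y.
have Pxy := Fc_best IP Cy.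
have Pyx : P y (Fc P) by apply: contrapT => h; apply: ns.
have [k ek] := e_onto Cy.
have [zx zy] := (range_Zs CF, range_Zs Cy).
case: (pselect (ltZ (Fc P) y)) => xy.
  have [Da ia] := indiff_prefP hD zx zy xy.
  by exists j, k; rewrite ej ek; split => //; exact (rsc_indiff_unique hD Da DP zx zy xy ia (conj Pxy Pyx)).
case: (pselect (ltZ y (Fc P))) => yx.
  have [Da ia] := indiff_prefP hD zy zx yx.
  by exists k, j; rewrite ej ek; split => //; exact (rsc_indiff_unique hD Da DP zy zx yx ia (conj Pyx Pxy)).
exfalso; case: (not_ltZ_dominate xy yx) => [[h1 h2]|[h1 h2]].
  by apply/ns/(cp_strict_dominate hP zx zy h1 h2) => e'; apply: nyx.
by case: (cp_strict_dominate hP zy zx h1 h2 nyx).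
Qed.

Definition ambiguous : set T := I `\` \bigcup_k unique_best (e k).

Lemma measurable_ambiguous : measurable ambiguous.
Proof.
apply: measurableD; first exact: measurable_interval.
by apply: bigcupT_measurable => k; apply: measurable_unique_best.
Qed.

Lemma ambiguous_null : mu ambiguous = 0%E.
Proof.
pose S j k : set T := [set P | I P /\ ltZ (e j) (e k) /\ P = indiff_pref D (e j) (e k)].
have S_null j k : mu.-negligible (S j k).
  case: (pselect (ltZ (e j) (e k))) => jk; last first.
    rewrite (_ : S j k = set0); first exact: negligible_set0.
    by apply/seteqP; split => P // [_ []].
  have mS : measurable (S j k).
    rewrite (_ : S j k = [set P | I P /\ P = indiff_pref D (e j) (e k)]).
      exact (measurable_indiff_pref (Rl := Rl) (Rh := Rh) hD (e_Zs j) (e_Zs k) jk).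
    by apply/seteqP; split => P [IP]; [case | split].
  exists (S j k); split => //.
  apply: (continuous_measure_subsingleton hmu mcont mS) => [P []//|P Q].
  by move=> [_ [_ ->]] [_ [_ ->]].
apply: (measure_negligible measurable_ambiguous).
apply: negligibleS (negligible_bigcup (fun j => negligible_bigcup (S_null j))).
move=> P [IP nT]; have [j [k [jk eP]]] := not_unique_best_indiff IP nT.
by exists j => //; exists k.
Qed.

Definition covered n : set T := \bigcup_(k in [set k | (k < n)%N]) unique_best (e k).

Lemma measurable_covered n : measurable (covered n).
Proof. by apply: bigcup_measurable => k _; apply: measurable_unique_best. Qed.

Lemma covered_interval n : covered n `<=` I.
Proof. by move=> P [k _ []]. Qed.

Lemma uncovered_small (d : R) : 0 < d -> exists n, (mu (I `\` covered n) < d%:E)%E.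
Proof.
move=> d0; pose F n : set T := I `\` covered n.
have mF n : measurable (F n).
  by apply: measurableD; [exact: measurable_interval | exact: measurable_covered].
have F0 : (mu (F 0%N) < +oo)%E.
  apply: (le_lt_trans (y := mu I)); last by case: hmu => _ ->; rewrite ltry.
  by apply: le_measure; rewrite ?inE //; [exact: measurable_interval | move=> P []].
have capF : \bigcap_n F n = ambiguous.
  apply/seteqP; split => P.
    move=> HF; have [IP _] := HF 0%N Logic.I; split => // -[k _ Tk].
    by have [_] := HF k.+1 Logic.I; apply; exists k => //=.
  by move=> [IP nT] n _; split => // -[k _ Tk]; apply: nT; exists k.
have Fdecr : {homo F : n m / (n <= m)%N >-> (m <= n)%O}.
  move=> n m nm; apply/subsetPset => P [IP nK]; split => // -[k kn Tk]; apply: nK.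
  by exists k => //=; apply: leq_trans kn nm.
have := nonincreasing_cvg_mu F0 mF (ltac:(rewrite capF; exact: measurable_ambiguous)) Fdecr.
rewrite capF ambiguous_null => cv; apply: contrapT => large.
have dF n : (d%:E <= mu (F n))%E by rewrite leNgt; apply/negP => h; apply: large; exists n.
have : (d%:E <= limn (mu \o F))%E.
  by apply: lime_ge; [apply/cvg_ex; exists 0%E | apply: nearW].
by rewrite (cvg_lim _ cv) // lee_fin leNgt d0.
Qed.

Definition menu n := map e (iota 0 n).

Lemma menu_Zs n z : z \in menu n -> Zs z.
Proof. by move=> /mapP[k _ ->]; apply: e_Zs. Qed.

(* Offer the first [n] points of the range, but keep [Fc P] whenever it is
   offered: this makes the truncation agree with [Fc] on [covered n]. *)
Definition truncation n (P : pref R) : R * R :=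
  if `[< exists2 k, (k < n)%N & e k = Fc P >] then Fc P else menu_choice P (menu n).

Lemma truncation_menu n P : truncation n P \in (0, 0) :: menu n.
Proof.
rewrite /truncation; case: asboolP => [[k kn <-]|_]; last exact: menu_choice_mem.
by rewrite inE map_f ?orbT // mem_iota add0n kn.
Qed.

Lemma truncation_best n P : I P -> forall z, z \in (0, 0) :: menu n ->
  P (truncation n P) z.
Proof.
move=> IP z hz; rewrite /truncation; case: asboolP => _; last first.
  by apply: menu_choice_best => //; [exact: interval_classical | exact: menu_Zs].
move: hz; rewrite inE => /orP[/eqP ->|/mapP[k _ ->]]; [exact: ir | exact: Fc_best_e].
Qed.

Lemma truncation_Zs n P : Zs (truncation n P).
Proof. by move: (truncation_menu n P); rewrite inE => /orP[/eqP ->|/menu_Zs]//; exact: Zs0. Qed.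

Lemma truncation_admissible n : admissible_finite D Rl Rh (truncation n).
Proof.
split => [P _|P P' IP _|P IP|]; first exact: truncation_Zs.
- by apply: truncation_best => //; apply: truncation_menu.
- by apply: truncation_best; rewrite ?inE ?eqxx.
- apply: (@sub_finite_set _ _ [set` (0, 0) :: menu n]); last exact: finite_seq.
  by move=> z [P _ <-]; apply: truncation_menu.
Qed.

Lemma truncation_covered n P : covered n P -> truncation n P = Fc P.
Proof.
move=> [k kn TP]; rewrite /truncation; case: asboolP => // -[].
by exists k; rewrite ?(unique_best_Fc TP).
Qed.

Lemma truncation_le n P : (truncation n P).1 <= \sum_(z <- (0, 0) :: menu n) `|z.1|.
Proof.
rewrite -(big_map fst xpredT); apply: mem_le_sum_norm.
by apply: map_f; apply: truncation_menu.
Qed.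

Lemma truncation_revenue_approx (eps : R) : 0 < eps -> 0 < revenue mu Fc ->
  exists n, revenue mu Fc - revenue mu (truncation n) <= eps.
Proof.
move=> e0 r0.
have mI : measurable (I : set T) by exact: measurable_interval.
have Fc0 (P : T) : I P -> 0 <= (Fc P).1 by move/mech/ZsE => [].
have Fc_fin : (\int[mu]_(P in I) ((Fc P).1)%:E < +oo)%E.
  rewrite ltNge leye_eq; apply/negP => /eqP Finf.
  by move: r0; rewrite /revenue /Rintegral Finf ltxx.
have [delta d0 approx] := ge0_integral_approx mI Fc0 Fc_fin e0.
have [n small] := uncovered_small d0.
exists n.
have G0 (P : T) : I P -> 0 <= (truncation n P).1 by have [] := (ZsE _).1 (truncation_Zs n P).
have agree (P : T) : covered n P -> (Fc P).1 <= (truncation n P).1.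
  by move/truncation_covered ->.
have := approx _ _ (measurable_covered n) (@covered_interval n) small G0 agree.
set B := \sum_(z <- (0, 0) :: menu n) `|z.1|.
have G_fin : (\int[mu]_(P in I) ((truncation n P).1)%:E)%E \is a fin_num.
  rewrite ge0_fin_numE; last by apply: integral_ge0 => P /G0; rewrite lee_fin.
  apply: (le_lt_trans (y := (\int[mu]_(P in I) (cst B%:E) P)%E)); last first.
    by rewrite integral_cst //; case: hmu => _ ->; rewrite mule1 ltry.
  by apply: ge0_le_integral_sup => P IP; rewrite lee_fin; [exact: G0 | exact: truncation_le].
have F_fin : (\int[mu]_(P in I) ((Fc P).1)%:E)%E \is a fin_num.
  by rewrite ge0_fin_numE // integral_ge0 // => P /Fc0; rewrite lee_fin.
rewrite -[X in (X <= _)%E](fineK F_fin) -[X in (_ <= X + _)%E](fineK G_fin).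
by rewrite -EFinD lee_fin /revenue /Rintegral => h; lra.
Qed.

End CountableRange.

Lemma countable_padded_enum {T : pointedType} (C : set T) (x0 : T) : countable C ->
  exists e : nat -> T, (forall k, C (e k) \/ e k = x0) /\ (forall x, C x -> exists k, e k = x).
Proof.
move=> /pcard_surjP [g sg].
exists (fun k => if `[< C (g k) >] then g k else x0); split => [k|x Cx].
  by case: asboolP => Cg; [left | right].
by have [k _ gk] := sg x Cx; exists k; case: asboolP => //; rewrite gk.
Qed.

Section ZeroMechanism.
Context {R : realType} (D : set (pref R)) (Rl Rh : pref R).

Lemma zero_mechanism_admissible : rich_single_crossing D ->
  admissible_finite D Rl Rh (fun=> (0, 0)).
Proof.
move=> hD; have refl0 P : Defs.interval D Rl Rh P -> P (0, 0) (0, 0).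
  by move=> IP; apply: (cp_refl (interval_classical hD IP) Zs0).
split => [P _|P P' IP _|P IP|]; [exact: Zs0 | exact: refl0 | exact: refl0 |].
apply: (@sub_finite_set _ _ [set` [:: ((0 : R), (0 : R))]]); last exact: finite_seq.
by move=> z [P _ <-]; rewrite /= inE.
Qed.

Lemma revenue_zero (mu : {measure set (borelI D Rl Rh) -> \bar R}) :
  revenue mu (fun=> (0, 0)) = 0.
Proof. by rewrite /revenue /Rintegral integral0_eq. Qed.

End ZeroMechanism.

Unset Implicit Arguments.
Set Strict Implicit.

Theorem mainTheorem15 (R : realType) (D : set (pref R)) (Rl Rh : pref R)
  (mu : {measure set (borelI D Rl Rh) -> \bar R}) (Fc : pref R -> R * R) :
  rich_single_crossing D -> D Rl -> D Rh -> preceqP Rl Rh ->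
  probability_on mu -> nontrivial mu -> continuous_measure mu ->
  mechanism D Rl Rh Fc -> strategy_proof D Rl Rh Fc ->
  individually_rational D Rl Rh Fc ->
  countable (mrange D Rl Rh Fc) -> closed (mrange D Rl Rh Fc) ->
  finite_set (limit_point (mrange D Rl Rh Fc)) ->
  (forall F, admissible_finite D Rl Rh F -> revenue mu F < revenue mu Fc) ->
  (forall eps : R, 0 < eps -> exists Feps,
     admissible_finite D Rl Rh Feps /\ revenue mu Fc - revenue mu Feps <= eps) /\
  (forall Fstar, admissible_finite D Rl Rh Fstar ->
     (forall F, admissible_finite D Rl Rh F -> revenue mu F <= revenue mu Fstar) ->
     revenue mu Fc <= revenue mu Fstar).
Proof.
move=> hD _ _ _ hmu _ mcont mech sp ir cnt _ _ better.
have [e [e_range e_onto]] := countable_padded_enum (0, 0) cnt.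
have r0 : 0 < revenue mu Fc.
  by rewrite -(revenue_zero mu); apply/better/zero_mechanism_admissible.
have approx (eps : R) : 0 < eps -> exists Feps,
    admissible_finite D Rl Rh Feps /\ revenue mu Fc - revenue mu Feps <= eps.
  move=> e0; have [n hn] := truncation_revenue_approx hD hmu mcont mech sp e_range e_onto e0 r0.
  by exists (truncation Fc e n); split => //; apply: truncation_admissible.
split => // Fstar adm opt; rewrite leNgt; apply/negP => lt.
have [|Feps [aF hF]] := approx ((revenue mu Fc - revenue mu Fstar) / 2).
  by rewrite divr_gt0 // subr_gt0.
by have := opt Feps aF; lra.
Qed.
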